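(* Let $\alpha\in\mathcal A\cap\mathbb R$ be simple, and for $k\in\mathbb C$ let $u(k)$, $u^*(k)$ be unit vectors spanning $\ker_{L^2_0}(D(\alpha)+k)$ and $\ker_{L^2_0}(D(\alpha)^*+\bar k)$ respectively. Then $$\langle u(k)|C|u(k)\rangle=\langle u^*(k)|C|u^*(k)\rangle\quad\text{for all }k\in\mathbb C,$$ i.e. $e_+(k)=e_-(k)$ where $e_+(k)=-\langle u(k)|C|u(k)\rangle$, $e_-(k)=-\langle u^*(k)|C|u^*(k)\rangle$.
   Context: Let $\omega=e^{2\pi i/3}$, $\Lambda=\mathbb Z\oplus\omega\mathbb Z$, $K=\frac43\pi$, $\langle z,w\rangle=\operatorname{Re}(z\bar w)$. Let $U,V\in C^\infty(\mathbb C)$ satisfy, for all $z$ and $\gamma\in\Lambda$: $U(z+\gamma)=e^{i\langle\gamma,K\rangle}U(z)$, $U(\omega z)=\omega U(z)$, $\overline{U(\bar z)}=-U(-z)$, and $V(z)=V(\bar z)=\overline{V(-z)}$, $V(\omega z)=V(z)$, $V(z+\gamma)=e^{i\langle\gamma,K\rangle}V(z)$. With $D_{\bar z}=-i\partial_{\bar z}$, $D(\alpha)=\begin{pmatrix}2D_{\bar z}&\alpha U(z)\\ \alpha U(-z)&2D_{\bar z}\end{pmatrix}$, $C=\begin{pmatrix}0&V(z)\\ V(-z)&0\end{pmatrix}$. $L_\gamma u(z)=\operatorname{diag}(e^{i\langle\gamma,K\rangle},e^{-i\langle\gamma,K\rangle})u(z+\gamma)$ and $L^2_0=L^2_0(\mathbb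 C;\mathbb C^2)=\{u\in L^2_{loc}(\mathbb C;\mathbb C^2):L_\gamma u=u\ \forall\gamma\in\Lambda\}$, with $\langle v|A|w\rangle=\int_{\mathbb C/\Lambda}(Aw)\cdot\bar v\,dm$. $\alpha$ is magic ($\alpha\in\mathcal A$) if $\ker_{L^2_0}(D(\alpha)+k)\ne\{0\}$ for all $k\in\mathbb C$, and simple if this kernel is one-dimensional for all $k$ (then also $\ker_{L^2_0}(D(\alpha)^*+\bar k)$ is one-dimensional). *)

From Stdlib Require Import Reals ZArith List.
From Coquelicot Require Import Coquelicot.

Open Scope R_scope.

Notation CC := Complex.C.

Definition cre (z : CC) : R := fst z.
Definition cim (z : CC) : R := snd z.
Definition cconj (z : CC) : CC := Cconj z.
(* omega = e^{2 pi i/3} = -1/2 + i sqrt3/2 *)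
Definition omega : CC := (-(1/2), sqrt 3 / 2).
Definition Kpt : CC := RtoC (4 * PI / 3).
Definition rinner (z w : CC) : R := cre (Cmult z (cconj w)).
Definition cexpi (t : R) : CC := (cos t, sin t).
Definition latpt (a b : Z) : CC := Cplus (RtoC (IZR a)) (Cmult (RtoC (IZR b)) omega).
Definition chi (g : CC) : CC := cexpi (rinner g Kpt).

(* direction: true = x (real direction), false = y (imaginary direction) *)
Definition dirv (d : bool) : CC := if d then (1, 0) else (0, 1).
Definition line (f : CC -> CC) (d : bool) (p : CC) (t : R) : CC :=
  f (Cplus p (Cmult (RtoC t) (dirv d))).
Definition pd (d : bool) (f : CC -> CC) (p : CC) : CC :=
  (Derive (fun t => cre (line f d p t)) 0, Derive (fun t => cim (line f d p t)) 0).
Fixpoint iterpd (ds : list bool) (f : CC -> CC) : CC -> CC :=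
  match ds with nil => f | d :: ds' => pd d (iterpd ds' f) end.
Definition smooth (f : CC -> CC) : Prop :=
  forall ds : list bool,
    (forall p : CC, continuous (iterpd ds f) p) /\
    (forall (d : bool) (p : CC),
        ex_derive (fun t => cre (line (iterpd ds f) d p t)) 0 /\
        ex_derive (fun t => cim (line (iterpd ds f) d p t)) 0).

Definition dzb (f : CC -> CC) (p : CC) : CC :=
  Cmult (RtoC (1/2)) (Cplus (pd true f p) (Cmult Ci (pd false f p))).
Definition dz (f : CC -> CC) (p : CC) : CC :=
  Cmult (RtoC (1/2)) (Cminus (pd true f p) (Cmult Ci (pd false f p))).
Definition Dzb (f : CC -> CC) (p : CC) : CC := Cmult (Copp Ci) (dzb f p).
Definition Dz (f : CC -> CC) (p : CC) : CC := Cmult (Copp Ci) (dz f p).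

Definition U_hyp (U : CC -> CC) : Prop :=
  smooth U /\
  (forall z a b, U (Cplus z (latpt a b)) = Cmult (chi (latpt a b)) (U z)) /\
  (forall z, U (Cmult omega z) = Cmult omega (U z)) /\
  (forall z, cconj (U (cconj z)) = Copp (U (Copp z))).

Definition V_hyp (V : CC -> CC) : Prop :=
  smooth V /\
  (forall z, V z = V (cconj z)) /\
  (forall z, V (cconj z) = cconj (V (Copp z))) /\
  (forall z, V (Cmult omega z) = V z) /\
  (forall z a b, V (Cplus z (latpt a b)) = Cmult (chi (latpt a b)) (V z)).

Definition vfun := CC -> CC * CC.

Definition L0_inv (u : vfun) : Prop :=
  forall z a b,
    Cmult (chi (latpt a b)) (fst (u (Cplus z (latpt a b)))) = fst (u z) /\
    Cmult (cconj (chi (latpt a b))) (snd (u (Cplus z (latpt a b)))) = snd (u z).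

(* smooth elements of L^2_0 (kernel elements of the elliptic operators are smooth) *)
Definition L0_smooth (u : vfun) : Prop :=
  smooth (fun z => fst (u z)) /\ smooth (fun z => snd (u z)) /\ L0_inv u.

Definition Dk (U : CC -> CC) (alpha : CC) (k : CC) (u : vfun) : vfun :=
  fun z =>
    (Cplus (Cplus (Cmult 2 (Dzb (fun w => fst (u w)) z)) (Cmult alpha (Cmult (U z) (snd (u z)))))
           (Cmult k (fst (u z))),
     Cplus (Cplus (Cmult alpha (Cmult (U (Copp z)) (fst (u z)))) (Cmult 2 (Dzb (fun w => snd (u w)) z)))
           (Cmult k (snd (u z)))).

(* (D(alpha)^* + conj k) u, with D(alpha)^* the formal L^2 adjoint:
   D(alpha)^* = [[2 D_z, conj alpha conj(U(-z))], [conj alpha conj(U(z)), 2 D_z]] *)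
Definition Dstark (U : CC -> CC) (alpha : CC) (k : CC) (u : vfun) : vfun :=
  fun z =>
    (Cplus (Cplus (Cmult 2 (Dz (fun w => fst (u w)) z))
                  (Cmult (cconj alpha) (Cmult (cconj (U (Copp z))) (snd (u z)))))
           (Cmult (cconj k) (fst (u z))),
     Cplus (Cplus (Cmult (cconj alpha) (Cmult (cconj (U z)) (fst (u z))))
                  (Cmult 2 (Dz (fun w => snd (u w)) z)))
           (Cmult (cconj k) (snd (u z)))).

Definition is_zero_vfun (u : vfun) : Prop := forall z, u z = (RtoC 0, RtoC 0).

Definition in_ker_D (U : CC -> CC) (alpha k : CC) (u : vfun) : Prop :=
  L0_smooth u /\ is_zero_vfun (Dk U alpha k u).
Definition in_ker_Dstar (U : CC -> CC) (alpha k : CC) (u : vfun) : Prop :=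
  L0_smooth u /\ is_zero_vfun (Dstark U alpha k u).

Definition magic (U : CC -> CC) (alpha : CC) : Prop :=
  forall k : CC, exists u, in_ker_D U alpha k u /\ ~ is_zero_vfun u.

Definition simple (U : CC -> CC) (alpha : CC) : Prop :=
  forall k : CC, exists u0, in_ker_D U alpha k u0 /\ ~ is_zero_vfun u0 /\
    forall u, in_ker_D U alpha k u ->
      exists c : CC, forall z, u z = (Cmult c (fst (u0 z)), Cmult c (snd (u0 z))).

(* fundamental domain {s + t omega : s,t in [0,1]}; Jacobian = Im omega = sqrt3/2 *)
Definition int_torus (f : CC -> CC) : CC :=
  (sqrt 3 / 2 * RInt (fun s => RInt (fun t => cre (f (Cplus (RtoC s) (Cmult (RtoC t) omega)))) 0 1) 0 1,
   sqrt 3 / 2 * RInt (fun s => RInt (fun t => cim (f (Cplus (RtoC s) (Cmult (RtoC t) omega)))) 0 1) 0 1).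

(* <v|A|w> = int_{C/Lambda} (A w) . conj v dm ; here the operator is passed applied *)
Definition braket (v Aw : vfun) : CC :=
  int_torus (fun z => Cplus (Cmult (fst (Aw z)) (cconj (fst (v z))))
                            (Cmult (snd (Aw z)) (cconj (snd (v z))))).

Definition unit_vec (u : vfun) : Prop := braket u u = RtoC 1.

Definition Cop (V : CC -> CC) (w : vfun) : vfun :=
  fun z => (Cmult (V z) (snd (w z)), Cmult (V (Copp z)) (fst (w z))).

(* For real alpha, u |-> conj (u (-z)) maps ker (D(alpha)^* + conj k) into ker (D(alpha) + k):
   reflection and conjugation turn D_zbar into D_z and fix alpha and k.  By simplicity the
   normalised u^* is therefore c conj (u (-z)) for some constant c.  The densities of
   <u^*|u^*> and <u^*|C|u^*> are |c|^2 times the reflected densities of <u|u> and <u|C|u>,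
   which are invariant under translation by 1 + omega, and z |-> -z maps the fundamental
   domain onto its translate by -(1 + omega); so |c| = 1 and the two expectations agree.
   Integrals are manipulated without integrability hypotheses, using that Coquelicot's
   RInt is 0 on non-integrable functions. *)

From Pilot Require Import Defs.
From Stdlib Require Import Reals ZArith List.
From Coquelicot Require Import Coquelicot.
From Stdlib Require Import Lra Classical FunctionalExtensionality PropExtensionality.

Open Scope R_scope.

Ltac complex_eq :=
  apply injective_projections;
  unfold Cmult, Cplus, Copp, Cminus, cconj, Cconj, RtoC, Ci, cre, cim; simpl; try ring.

(* Coquelicot states RInt identities at the carrier of R_CompleteNormedModule, which ring and
   field do not recognise as R. *)
Ltac to_R := match goal with |- ?x = ?y => change (@eq R x y) end.

Lemma RInt_not_ex (f : R -> R) (a b : R) : ~ ex_RInt f a b -> RInt f a b = 0.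
Proof.
  intros Hf. unfold RInt, iota, lim; simpl. unfold R_complete_lim.
  match goal with |- real (Lub_Rbar ?P) = _ => replace P with (fun _ : R => True) end.
  - replace (Lub_Rbar (fun _ : R => True)) with p_infty; [reflexivity|].
    symmetry. apply is_lub_Rbar_unique. split.
    + intros x _; exact I.
    + intros [l| |] Hl; simpl; auto.
      * specialize (Hl (l + 1) I). simpl in Hl. lra.
      * exact (Hl 0 I).
  - apply functional_extensionality; intros A; apply propositional_extensionality.
    split; [|auto]. intros _ x Hx. exfalso. apply Hf. now exists x.
Qed.

Lemma RInt_scal_R (f : R -> R) (a b r : R) :
  RInt (fun x => r * f x) a b = r * RInt f a b.
Proof.
  destruct (Req_dec r 0) as [-> | Hr].
  - rewrite (RInt_ext _ (fun _ => 0)) by (intros; apply Rmult_0_l).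
    rewrite RInt_const. change ((b - a) * 0 = 0 * RInt f a b). ring.
  - destruct (classic (ex_RInt f a b)) as [Hf | Hf].
    + exact (RInt_scal f a b r Hf).
    + rewrite !RInt_not_ex; [to_R; ring | exact Hf |].
      intros Hrf. apply Hf.
      apply (ex_RInt_ext (fun x => / r * (r * f x))); [intros; to_R; now field |].
      now apply (ex_RInt_scal (fun x => r * f x)).
Qed.

Lemma ex_RInt_reflect (f : R -> R) (a b : R) :
  ex_RInt f a b -> ex_RInt (fun x => f (a + b - x)) a b.
Proof.
  intros Hf. apply ex_RInt_swap in Hf.
  pose proof (ex_RInt_comp_lin f (-1) (a + b) a b) as H.
  replace (-1 * a + (a + b)) with b in H by ring.
  replace (-1 * b + (a + b)) with a in H by ring.
  apply (ex_RInt_ext (fun x => -1 * (-1 * f (-1 * x + (a + b))))).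
  - intros x _. replace (-1 * x + (a + b)) with (a + b - x) by ring. to_R; ring.
  - apply (ex_RInt_scal (fun x => -1 * f (-1 * x + (a + b)))), H, Hf.
Qed.

Lemma RInt_reflect (f : R -> R) (a b : R) : RInt (fun x => f (a + b - x)) a b = RInt f a b.
Proof.
  destruct (classic (ex_RInt f a b)) as [Hf | Hf].
  - pose proof (RInt_comp_lin f (-1) (a + b) a b) as H.
    replace (-1 * a + (a + b)) with b in H by ring.
    replace (-1 * b + (a + b)) with a in H by ring.
    rewrite <- (opp_RInt_swap f a b Hf) in H.
    specialize (H (ex_RInt_swap _ _ _ Hf)).
    change (RInt (fun y => -1 * f (-1 * y + (a + b))) a b = - RInt f a b) in H.
    rewrite RInt_scal_R in H.
    rewrite <- (RInt_ext (fun y => f (-1 * y + (a + b)))) by (intros; f_equal; ring).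
    to_R; lra.
  - rewrite !RInt_not_ex; [reflexivity | exact Hf |].
    intros Hr. apply Hf.
    apply (ex_RInt_ext (fun x => f (a + b - (a + b - x)))); [intros x _; f_equal; ring |].
    now apply (ex_RInt_reflect (fun x => f (a + b - x))).
Qed.

Notation torus_point s t := (Cplus (RtoC s) (Cmult (RtoC t) omega)).

Lemma int_torus_scal (r : R) (g : CC -> CC) :
  int_torus (fun z => Cmult (RtoC r) (g z)) = Cmult (RtoC r) (int_torus g).
Proof.
  assert (Hpt : forall phi : CC -> R, (forall w, phi (Cmult (RtoC r) w) = r * phi w) ->
    RInt (fun s => RInt (fun t => phi (Cmult (RtoC r) (g (torus_point s t)))) 0 1) 0 1 =
    r * RInt (fun s => RInt (fun t => phi (g (torus_point s t))) 0 1) 0 1).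
  { intros phi Hphi. rewrite <- RInt_scal_R. apply RInt_ext. intros s _.
    rewrite <- RInt_scal_R. apply RInt_ext. intros t _. apply Hphi. }
  unfold int_torus.
  rewrite !Hpt by (intros; unfold cre, cim, Cmult, RtoC; simpl; ring).
  complex_eq.
Qed.

Lemma latpt_1_1 : latpt 1 1 = Cplus (RtoC 1) omega.
Proof. unfold latpt. complex_eq. Qed.

Lemma int_torus_opp (g : CC -> CC) :
  (forall z, g (Cplus z (latpt 1 1)) = g z) ->
  int_torus (fun z => g (Copp z)) = int_torus g.
Proof.
  intros Hg.
  assert (Hpt : forall (phi : CC -> R),
    RInt (fun s => RInt (fun t => phi (g (Copp (torus_point s t)))) 0 1) 0 1 =
    RInt (fun s => RInt (fun t => phi (g (torus_point s t))) 0 1) 0 1).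
  { intros phi. rewrite <- RInt_reflect. apply RInt_ext. intros s _.
    rewrite <- RInt_reflect. apply RInt_ext. intros t _.
    rewrite <- Hg, latpt_1_1. do 2 f_equal. unfold omega. complex_eq. }
  unfold int_torus. now rewrite !Hpt.
Qed.

Lemma int_torus_reflect (r : R) (g h : CC -> CC) :
  (forall z, g (Cplus z (latpt 1 1)) = g z) ->
  (forall z, h z = Cmult (RtoC r) (g (Copp z))) ->
  int_torus h = Cmult (RtoC r) (int_torus g).
Proof.
  intros Hg Hh. replace h with (fun z => Cmult (RtoC r) (g (Copp z))).
  - now rewrite (int_torus_scal r (fun z => g (Copp z))), int_torus_opp.
  - apply functional_extensionality; intros z. now rewrite Hh.
Qed.

(* The real factor r records the sign (-1) picked up by each partial derivative. *)
Definition conj_refl (r : R) (h : CC -> CC) : CC -> CC :=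
  fun p => Cmult (RtoC r) (cconj (h (Copp p))).

Lemma line_conj_refl_re (r : R) (h : CC -> CC) (d : bool) (p : CC) (t : R) :
  cre (line (conj_refl r h) d p t) = r * cre (line h d (Copp p) (- t)).
Proof.
  unfold line, conj_refl.
  replace (Copp (Cplus p (Cmult (RtoC t) (dirv d))))
    with (Cplus (Copp p) (Cmult (RtoC (- t)) (dirv d))) by complex_eq.
  unfold cre, cconj, Cconj, Cmult, RtoC; simpl. ring.
Qed.

Lemma line_conj_refl_im (r : R) (h : CC -> CC) (d : bool) (p : CC) (t : R) :
  cim (line (conj_refl r h) d p t) = - r * cim (line h d (Copp p) (- t)).
Proof.
  unfold line, conj_refl.
  replace (Copp (Cplus p (Cmult (RtoC t) (dirv d))))
    with (Cplus (Copp p) (Cmult (RtoC (- t)) (dirv d))) by complex_eq.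
  unfold cim, cconj, Cconj, Cmult, RtoC; simpl. ring.
Qed.

Lemma is_derive_scal_opp (x : R -> R) (r : R) :
  ex_derive x 0 -> is_derive (fun t => r * x (- t)) 0 (- r * Derive x 0).
Proof.
  intros Hx. auto_derive.
  - now rewrite Ropp_0.
  - rewrite Ropp_0. change (fun y => x y) with x. ring.
Qed.

Lemma Derive_scal_opp (x : R -> R) (r : R) :
  ex_derive x 0 -> Derive (fun t => r * x (- t)) 0 = - r * Derive x 0.
Proof. intros Hx. exact (is_derive_unique _ _ _ (is_derive_scal_opp x r Hx)). Qed.

Definition line_differentiable (h : CC -> CC) : Prop :=
  forall d p, ex_derive (fun t => cre (line h d p t)) 0 /\ ex_derive (fun t => cim (line h d p t)) 0.

Lemma pd_conj_refl (r : R) (h : CC -> CC) (d : bool) :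
  line_differentiable h -> pd d (conj_refl r h) = conj_refl (- r) (pd d h).
Proof.
  intros Hh. apply functional_extensionality; intros p.
  destruct (Hh d (Copp p)) as [Hre Him].
  unfold pd.
  rewrite (Derive_ext _ _ 0 (line_conj_refl_re r h d p)), (Derive_ext _ _ 0 (line_conj_refl_im r h d p)).
  rewrite (Derive_scal_opp (fun t => cre (line h d (Copp p) t)) r Hre).
  rewrite (Derive_scal_opp (fun t => cim (line h d (Copp p) t)) (- r) Him).
  unfold conj_refl. complex_eq.
Qed.

Lemma iterpd_conj_refl (ds : list bool) :
  forall (r : R) (h : CC -> CC), smooth h ->
  iterpd ds (conj_refl r h) = conj_refl (r * (-1) ^ length ds) (iterpd ds h).
Proof.
  induction ds as [|d ds IH]; intros r h Hh; simpl.
  - now rewrite Rmult_1_r.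
  - rewrite IH, pd_conj_refl by (try exact Hh; exact (proj2 (Hh ds))).
    f_equal. ring.
Qed.

Lemma continuous_scal_cconj (r : R) (z : CC) :
  continuous (fun w => Cmult (RtoC r) (cconj w)) z.
Proof.
  apply (continuous_ext (fun w : CC => ((r * fst w, - (r * snd w)) : CC))).
  { intros w. complex_eq. }
  apply (continuous_comp_2 (fun w : CC => r * fst w) (fun w : CC => - (r * snd w)) (fun a b => (a, b) : CC)).
  - apply (continuous_scal_r (K := R_AbsRing) r (fun w : CC => fst w)). destruct z; apply continuous_fst.
  - apply (continuous_opp (V := R_NormedModule) (fun w : CC => r * snd w)).
    apply (continuous_scal_r (K := R_AbsRing) r (fun w : CC => snd w)). destruct z; apply continuous_snd.
  - apply (continuous_ext (fun w => w)); [now intros [] | apply continuous_id].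
Qed.

Lemma continuous_conj_refl (r : R) (h : CC -> CC) (p : CC) :
  continuous h (Copp p) -> continuous (conj_refl r h) p.
Proof.
  intros Hh.
  apply (continuous_comp (fun y => h (Copp y)) (fun w => Cmult (RtoC r) (cconj w)));
    [| apply continuous_scal_cconj].
  apply (continuous_comp Copp h); [| exact Hh].
  apply (continuous_opp (V := C_NormedModule)), continuous_id.
Qed.

Lemma smooth_conj_refl (r : R) (h : CC -> CC) : smooth h -> smooth (conj_refl r h).
Proof.
  intros Hh ds. rewrite iterpd_conj_refl by exact Hh. split.
  - intros p. apply continuous_conj_refl, (proj1 (Hh ds)).
  - intros d p. destruct (proj2 (Hh ds) d (Copp p)) as [Hre Him]. split.
    + apply (ex_derive_ext (fun t => (r * (-1) ^ length ds) * cre (line (iterpd ds h) d (Copp p) (- t)))).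
      { intros t. symmetry. apply line_conj_refl_re. }
      eexists. apply (is_derive_scal_opp (fun t => cre (line (iterpd ds h) d (Copp p) t))), Hre.
    + apply (ex_derive_ext (fun t => - (r * (-1) ^ length ds) * cim (line (iterpd ds h) d (Copp p) (- t)))).
      { intros t. symmetry. apply line_conj_refl_im. }
      eexists. apply (is_derive_scal_opp (fun t => cim (line (iterpd ds h) d (Copp p) t))), Him.
Qed.

Lemma Dzb_conj_refl (f : CC -> CC) (p : CC) :
  smooth f -> Dzb (conj_refl 1 f) p = cconj (Dz f (Copp p)).
Proof.
  intros Hf. unfold Dzb, dzb, Dz, dz.
  rewrite !pd_conj_refl by exact (proj2 (Hf nil)).
  unfold conj_refl. complex_eq.
Qed.

Lemma chi_mul_conj (g : CC) : Cmult (chi g) (cconj (chi g)) = RtoC 1.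
Proof.
  unfold chi, cexpi. pose proof (sin2_cos2 (rinner g Kpt)) as H. unfold Rsqr in H.
  complex_eq. lra.
Qed.

Lemma chi_neq_0 (g : CC) : chi g <> RtoC 0.
Proof.
  intros H. pose proof (chi_mul_conj g) as E. rewrite H, Cmult_0_l in E.
  apply (f_equal fst) in E. simpl in E. lra.
Qed.

Lemma Cconj_chi (g : CC) : Cconj (chi g) = Cinv (chi g).
Proof.
  change (cconj (chi g) = Cinv (chi g)).
  transitivity (Cmult (Cinv (chi g)) (Cmult (chi g) (cconj (chi g)))).
  - field. apply chi_neq_0.
  - rewrite chi_mul_conj. ring.
Qed.

Definition vconj_refl (c : CC) (u : vfun) : vfun :=
  fun z => (Cmult c (cconj (fst (u (Copp z)))), Cmult c (cconj (snd (u (Copp z))))).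

Lemma L0_inv_vconj_refl (c : CC) (u : vfun) : L0_inv u -> L0_inv (vconj_refl c u).
Proof.
  intros Hu z a b. unfold vconj_refl; simpl.
  destruct (Hu (Copp (Cplus z (latpt a b))) a b) as [E1 E2].
  replace (Cplus (Copp (Cplus z (latpt a b))) (latpt a b)) with (Copp z) in E1, E2 by complex_eq.
  rewrite <- E1, <- E2. unfold cconj. rewrite !Cmult_conj, Cconj_conj, Cconj_chi.
  split; field; apply chi_neq_0.
Qed.

Lemma in_ker_D_vconj_refl (U : CC -> CC) (alpha : R) (k : CC) (u : vfun) :
  in_ker_Dstar U (RtoC alpha) k u -> in_ker_D U (RtoC alpha) k (vconj_refl (RtoC 1) u).
Proof.
  intros [[Hu1 [Hu2 Hinv]] HD]. split; [split; [|split] |].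
  - exact (smooth_conj_refl 1 _ Hu1).
  - exact (smooth_conj_refl 1 _ Hu2).
  - now apply L0_inv_vconj_refl.
  - intros z. specialize (HD (Copp z)). unfold Dstark in HD. unfold Dk.
    change (fun w => fst (vconj_refl (RtoC 1) u w)) with (conj_refl 1 (fun w => fst (u w))).
    change (fun w => snd (vconj_refl (RtoC 1) u w)) with (conj_refl 1 (fun w => snd (u w))).
    rewrite !Dzb_conj_refl by assumption.
    replace (Copp (Copp z)) with z in HD by complex_eq.
    pose proof (f_equal fst HD) as E1. pose proof (f_equal snd HD) as E2. simpl in E1, E2.
    unfold vconj_refl; simpl. apply injective_projections; simpl.
    (* each component is the conjugate of the adjoint equation at -z *)
    + match type of E1 with ?Y = _ => transitivity (cconj Y) end; [complex_eq | rewrite E1; complex_eq].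
    + match type of E2 with ?Y = _ => transitivity (cconj Y) end; [complex_eq | rewrite E2; complex_eq].
Qed.

Lemma unit_vec_nonzero (u : vfun) : unit_vec u -> ~ is_zero_vfun u.
Proof.
  intros Hu H0. unfold unit_vec, braket in Hu.
  match type of Hu with int_torus ?F = _ =>
    replace F with (fun _ : CC => Cmult (RtoC 0) (RtoC 0)) in Hu end.
  - rewrite (int_torus_scal 0 (fun _ => RtoC 0)) in Hu.
    apply (f_equal fst) in Hu. simpl in Hu. lra.
  - apply functional_extensionality; intros z. rewrite H0. complex_eq.
Qed.

Lemma simple_ker_proportional (U : CC -> CC) (alpha k : CC) (u w : vfun) :
  simple U alpha -> in_ker_D U alpha k u -> ~ is_zero_vfun u -> in_ker_D U alpha k w ->
  exists c, forall z, w z = (Cmult c (fst (u z)), Cmult c (snd (u z))).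
Proof.
  intros Hs Hu Hu0 Hw. destruct (Hs k) as [u0 [_ [_ Hrep]]].
  destruct (Hrep u Hu) as [cu Hcu], (Hrep w Hw) as [cw Hcw].
  assert (Hcu0 : cu <> RtoC 0).
  { intros ->. apply Hu0. intros z. rewrite Hcu. f_equal; ring. }
  exists (Cmult cw (Cinv cu)). intros z. rewrite Hcw, Hcu. simpl. f_equal; now field.
Qed.

Lemma eq_vconj_refl_of_scale (c : CC) (u w : vfun) :
  (forall z, vconj_refl (RtoC 1) w z = (Cmult c (fst (u z)), Cmult c (snd (u z)))) ->
  w = vconj_refl (cconj c) u.
Proof.
  intros Hw. apply functional_extensionality; intros z.
  specialize (Hw (Copp z)). unfold vconj_refl in *.
  replace (Copp (Copp z)) with z in Hw by complex_eq.
  apply (f_equal (fun p => (cconj (fst p), cconj (snd p)))) in Hw. simpl in Hw.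
  unfold cconj in *. rewrite !Cmult_conj, !Cconj_conj in Hw.
  rewrite <- Hw. destruct (w z). simpl. f_equal; complex_eq.
Qed.

Definition braket_density (v w : vfun) (z : CC) : CC :=
  Cplus (Cmult (fst (w z)) (cconj (fst (v z)))) (Cmult (snd (w z)) (cconj (snd (v z)))).

Lemma braket_density_vconj_refl (c : CC) (u : vfun) (z : CC) :
  braket_density (vconj_refl c u) (vconj_refl c u) z
  = Cmult (RtoC (Cmod c ^ 2)) (braket_density u u (Copp z)).
Proof.
  rewrite Cmod2_conj. unfold braket_density, vconj_refl, cconj; simpl.
  rewrite !Cmult_conj, !Cconj_conj. ring.
Qed.

Lemma braket_density_Cop_vconj_refl (V : CC -> CC) (c : CC) (u : vfun) (z : CC) :
  braket_density (vconj_refl c u) (Cop V (vconj_refl c u)) z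
  = Cmult (RtoC (Cmod c ^ 2)) (braket_density u (Cop V u) (Copp z)).
Proof.
  rewrite Cmod2_conj. unfold braket_density, Cop, vconj_refl, cconj; simpl.
  replace (Copp (Copp z)) with z by complex_eq.
  rewrite !Cmult_conj, !Cconj_conj. ring.
Qed.

Lemma L0_inv_shift (u : vfun) (z : CC) (a b : Z) : L0_inv u ->
  fst (u (Cplus z (latpt a b))) = Cmult (cconj (chi (latpt a b))) (fst (u z)) /\
  snd (u (Cplus z (latpt a b))) = Cmult (chi (latpt a b)) (snd (u z)).
Proof.
  intros Hu. destruct (Hu z a b) as [E1 E2].
  rewrite <- E1, <- E2. unfold cconj. rewrite Cconj_chi.
  split; field; apply chi_neq_0.
Qed.

Lemma braket_density_periodic (u : vfun) (z : CC) (a b : Z) : L0_inv u ->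
  braket_density u u (Cplus z (latpt a b)) = braket_density u u z.
Proof.
  intros Hu. destruct (L0_inv_shift u z a b Hu) as [E1 E2].
  unfold braket_density. rewrite E1, E2. unfold cconj. rewrite !Cmult_conj, Cconj_conj, Cconj_chi.
  field. apply chi_neq_0.
Qed.

Lemma cexpi_add (s t : R) : Cmult (cexpi s) (cexpi t) = cexpi (s + t).
Proof. unfold cexpi. rewrite cos_plus, sin_plus. complex_eq. Qed.

Lemma chi_latpt_1_1_cube :
  Cmult (Cmult (chi (latpt 1 1)) (chi (latpt 1 1))) (chi (latpt 1 1)) = RtoC 1.
Proof.
  assert (Hangle : rinner (latpt 1 1) Kpt = 2 * PI / 3).
  { rewrite latpt_1_1. unfold rinner, Kpt, omega, cre, cconj, Cconj, Cmult, Cplus, RtoC; simpl. field. }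
  unfold chi. rewrite !cexpi_add, Hangle.
  replace (2 * PI / 3 + 2 * PI / 3 + 2 * PI / 3) with (2 * PI) by field.
  unfold cexpi. now rewrite cos_2PI, sin_2PI.
Qed.

Lemma braket_density_Cop_periodic (V : CC -> CC) (u : vfun) (z : CC) :
  V_hyp V -> L0_inv u ->
  braket_density u (Cop V u) (Cplus z (latpt 1 1)) = braket_density u (Cop V u) z.
Proof.
  intros (_ & _ & _ & _ & HV) Hu. destruct (L0_inv_shift u z 1 1 Hu) as [E1 E2].
  pose proof (chi_neq_0 (latpt 1 1)) as Hx.
  assert (EV : V (Copp (Cplus z (latpt 1 1))) = Cmult (Cinv (chi (latpt 1 1))) (V (Copp z))).
  { pose proof (HV (Copp (Cplus z (latpt 1 1))) 1%Z 1%Z) as E.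
    replace (Cplus (Copp (Cplus z (latpt 1 1))) (latpt 1 1)) with (Copp z) in E by complex_eq.
    rewrite E. now field. }
  unfold braket_density, Cop; simpl. rewrite HV, EV, E1, E2.
  unfold cconj. rewrite !Cmult_conj, Cconj_conj, Cconj_chi.
  set (x := chi (latpt 1 1)) in *.
  transitivity (Cplus (Cmult (Cmult (Cmult x x) x) (Cmult (Cmult (V z) (snd (u z))) (Cconj (fst (u z)))))
                      (Cdiv (Cmult (Cmult (V (Copp z)) (fst (u z))) (Cconj (snd (u z)))) (Cmult (Cmult x x) x)));
    [now field |].
  unfold x. rewrite chi_latpt_1_1_cube. field.
Qed.

Lemma braket_vconj_refl (c : CC) (u : vfun) : L0_inv u ->
  braket (vconj_refl c u) (vconj_refl c u) = Cmult (RtoC (Cmod c ^ 2)) (braket u u).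
Proof.
  intros Hu. apply int_torus_reflect.
  - intros z. now apply braket_density_periodic.
  - apply braket_density_vconj_refl.
Qed.

Lemma braket_Cop_vconj_refl (V : CC -> CC) (c : CC) (u : vfun) : V_hyp V -> L0_inv u ->
  braket (vconj_refl c u) (Cop V (vconj_refl c u)) = Cmult (RtoC (Cmod c ^ 2)) (braket u (Cop V u)).
Proof.
  intros HV Hu. apply int_torus_reflect.
  - intros z. now apply braket_density_Cop_periodic.
  - apply braket_density_Cop_vconj_refl.
Qed.

Theorem lemma3p2 (U V : Defs.CC -> Defs.CC) (alpha : R) :
  U_hyp U -> V_hyp V ->
  magic U (RtoC alpha) -> simple U (RtoC alpha) ->
  forall (k : Defs.CC) (u us : vfun),
    in_ker_D U (RtoC alpha) k u -> unit_vec u ->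
    in_ker_Dstar U (RtoC alpha) k us -> unit_vec us ->
    braket u (Cop V u) = braket us (Cop V us).
Proof.
  intros _ HV _ Hsimple k u us Hu Hu_unit Hus Hus_unit.
  assert (Hinv : L0_inv u) by exact (proj2 (proj2 (proj1 Hu))).
  destruct (simple_ker_proportional U _ k u _ Hsimple Hu (unit_vec_nonzero u Hu_unit)
              (in_ker_D_vconj_refl U alpha k us Hus)) as [c Hc].
  apply eq_vconj_refl_of_scale in Hc. subst us.
  assert (Hmod : Cmod (cconj c) ^ 2 = 1).
  { unfold unit_vec in Hus_unit, Hu_unit.
    rewrite braket_vconj_refl, Hu_unit in Hus_unit by exact Hinv.
    apply (f_equal fst) in Hus_unit. simpl in Hus_unit. lra. }
  now rewrite braket_Cop_vconj_refl, Hmod, Cmult_1_l.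
Qed.
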